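(* Let $(\mathcal{C},\mathsf{I},\otimes,\lambda,\rho,\alpha)$ be a monoidal category with finite products, $\mathsf{T}=(T,\eta,\mu)$ a monoid in it, and $(\mathcal{E},\mathcal{M})$ an orthogonal factorization system on $\mathcal{C}$ such that: $\mathcal{E}$ is closed under $(-)\otimes S$ for every object $(S,s)$ of $\mathcal{M}/T$; the skew monoidal category $\mathcal{M}/\mathsf{T}=(\mathcal{M}/T,\mathsf{J},\boxdot)$ is monoidal; $\mathcal{E}$ contains all canonical morphisms $\langle\pi_i\otimes Y\rangle_i:(\prod_iX_i)\otimes Y\to\prod_i(X_i\otimes Y)$; and $\mathcal{E}$ is closed under finite products. Let $\phi:T^n\to T$ be an $n$-ary algebraic operation for $\mathsf{T}$ and $(R_1,r_1),\dots,(R_n,r_n)$ objects of $\mathcal{M}/T$. Factor $\phi\circ\prod_i r_i = r'\circ p$ with $p:\prod_iR_i\to R'$ in $\mathcal{E}$ and $r':R'\to T$ in $\mathcal{M}$. For each object $(S,s)$ of $\mathcal{M}/T$ let $\psi_S:\prod_i(R_i\boxdot S)\to R'\boxdot S$ be the unique morphism with $\psi_S\circ\prod_i q_{R_i,S}\circ\langle\pi_i\otimes S\rangle_i = q_{R',S}\circ(p\otimes S)$ and $(r'\boxdot s)\circ\psi_S = \phi\circ\prod_i(r_i\boxdot s)$. Then: (1) $\psi$ is an $(R_1,\dots,R_n;R')$-ary algebraic operation for the graded monoid $T_{\mathcal{M}}$, $\psi$ grades $\phi$, and every component $\psi_S$ is in $\mathcal{E}$. (2) For every object $(R'',r'')$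 of $\mathcal{M}/T$ and every $(R_1,\dots,R_n;R'')$-ary algebraic operation $\psi'$ for $T_{\mathcal{M}}$ that grades $\phi$, there is a unique morphism $f:(R',r')\to(R'',r'')$ in $\mathcal{M}/T$ such that $(f\boxdot S)\circ\psi_S=\psi'_S$ for all objects $S$ of $\mathcal{M}/T$.
   Context: Orthogonal factorization system $(\mathcal{E},\mathcal{M})$: both classes contain isomorphisms and are closed under composition; every commuting square $g e = m f$ with $e\in\mathcal{E}$, $m\in\mathcal{M}$ has a unique diagonal $d$ ($de=f$, $md=g$); every morphism factors as $m\circ e$. A monoid: $\eta:\mathsf{I}\to T$, $\mu:T\otimes T\to T$ with the usual unit and associativity laws. $\mathcal{M}/T$: objects $(S,s)$ with $s:S\to T$ in $\mathcal{M}$; morphisms $f:(S,s)\to(S',s')$ with $s'f=s$. Factor $\eta=j\circ q$ with $q:\mathsf{I}\to\mathsf{J}$ in $\mathcal{E}$, $j$ in $\mathcal{M}$; factor $\mu\circ(s\otimes s')=(s\boxdot s')\circ q_{S,S'}$ with $q_{S,S'}:S\otimes S'\to S\boxdot S'$ in $\mathcal{E}$, $s\boxdot s'$ in $\mathcal{M}$. This gives a skew monoidal structure $(\mathcal{M}/T,(\mathsf{J},j),\boxdot)$, denoted $\mathcal{M}/\mathsf{T}$, whose action on morphisms and structure maps are the unique diagonals compatible with the $q$'s and the structure maps of $\mathcal{C}$; in particular $f\boxdot f'$ is the unique morphism with $(f\boxdot f')q_{S_1,S_1'}=q_{S_2,S_2'}(f\otimes f')$ commuting with the maps to $T$, the right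 unitor is $r_S=q_{S,\mathsf{J}}\circ(S\otimes q)\circ\rho_S$, and the associator $a$ satisfies $a\,q_{S\boxdot S',S''}(q_{S,S'}\otimes S'')=q_{S,S'\boxdot S''}(S\otimes q_{S',S''})\alpha_{S,S',S''}$. The graded monoid (lax monoidal functor) $T_{\mathcal{M}}:\mathcal{M}/\mathsf{T}\to\mathcal{C}$ sends $(S,s)\mapsto S$ with unit $q$ and multiplication $q_{S,S'}$. An $n$-ary algebraic operation for $\mathsf{T}$ is $\phi:T^n\to T$ with $\phi\circ\mu^n\circ\langle\pi_i\otimes T\rangle_i=\mu\circ(\phi\otimes T)$. For a lax monoidal functor $(G,\eta^G,\mu^G):(\mathcal{G},I,\odot)\to\mathcal{C}$ from a monoidal category with associator $\alpha^{\mathcal{G}}$, a $(d_1,\dots,d_n;d')$-ary algebraic operation is a natural family $\psi_e:\prod_iG(d_i\odot e)\to G(d'\odot e)$ such that for all $e,e'$: $\psi_{e\odot e'}\circ\prod_iG(\alpha^{\mathcal{G}})\circ\prod_i\mu^G_{d_i\odot e,e'}\circ\langle\pi_i\otimes Ge'\rangle_i = G(\alpha^{\mathcal{G}})\circ\mu^G_{d'\odot e,e'}\circ(\psi_e\otimes Ge')$. For a grading with $\mathcal{M}$-components $g_d:Gd\to T$, $\psi$ grades $\phi$ if $g_{d'\odot e}\circ\psi_e=\phi\circ\prod_ig_{d_i\odot e}$ for all $e$; for $T_{\mathcal{M}}$, $g_{(S,s)}=s$. *)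

From mathcomp Require Import all_boot.
Set Implicit Arguments.
Unset Strict Implicit.
Unset Printing Implicit Defensive.

Declare Scope cat_scope.
Delimit Scope cat_scope with cat.
Open Scope cat_scope.

Record Cat := {
  Obj :> Type;
  Hom : Obj -> Obj -> Type;
  idm : forall A, Hom A A;
  comp : forall A B D, Hom B D -> Hom A B -> Hom A D;
  comp_idl : forall A B (f : Hom A B), comp (idm B) f = f;
  comp_idr : forall A B (f : Hom A B), comp f (idm A) = f;
  comp_assoc : forall A B D E (h : Hom D E) (g : Hom B D) (f : Hom A B),
      comp h (comp g f) = comp (comp h g) f }.
Arguments Hom {_} A B.
Arguments idm {_} A.
Arguments comp {_ A B D} g f.
Notation "g ∘ f" := (comp g f) (at level 40, left associativity) : cat_scope.

Definition is_iso (C : Cat) (A B : C) (f : Hom A B) :=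
  exists g : Hom B A, g ∘ f = idm A /\ f ∘ g = idm B.

Record Monoidal (C : Cat) := {
  tens : C -> C -> C;
  tensm : forall A B A' B', Hom A A' -> Hom B B' -> Hom (tens A B) (tens A' B');
  munit : C;
  lam : forall A, Hom (tens munit A) A;
  lam_inv : forall A, Hom A (tens munit A);
  rho : forall A, Hom A (tens A munit);
  rho_inv : forall A, Hom (tens A munit) A;
  alpha : forall A B D, Hom (tens (tens A B) D) (tens A (tens B D));
  alpha_inv : forall A B D, Hom (tens A (tens B D)) (tens (tens A B) D);
  tensm_id : forall A B, tensm (idm A) (idm B) = idm (tens A B);
  tensm_comp : forall A1 A2 A3 B1 B2 B3 (f : Hom A1 A2) (g : Hom A2 A3)
      (f' : Hom B1 B2) (g' : Hom B2 B3),
      tensm (g ∘ f) (g' ∘ f') = tensm g g' ∘ tensm f f';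
  lam_inv1 : forall A, lam A ∘ lam_inv A = idm A;
  lam_inv2 : forall A, lam_inv A ∘ lam A = idm (tens munit A);
  rho_inv1 : forall A, rho A ∘ rho_inv A = idm (tens A munit);
  rho_inv2 : forall A, rho_inv A ∘ rho A = idm A;
  alpha_inv1 : forall A B D, alpha A B D ∘ alpha_inv A B D = idm (tens A (tens B D));
  alpha_inv2 : forall A B D, alpha_inv A B D ∘ alpha A B D = idm (tens (tens A B) D);
  lam_nat : forall A B (f : Hom A B), f ∘ lam A = lam B ∘ tensm (idm munit) f;
  rho_nat : forall A B (f : Hom A B), rho B ∘ f = tensm f (idm munit) ∘ rho A;
  alpha_nat : forall A A' B B' D D' (f : Hom A A') (g : Hom B B') (h : Hom D D'),
      alpha A' B' D' ∘ tensm (tensm f g) h = tensm f (tensm g h) ∘ alpha A B D;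
  triangle : forall A B,
      tensm (idm A) (lam B) ∘ alpha A munit B = tensm (rho_inv A) (idm B);
  pentagon : forall A B D E,
      alpha A B (tens D E) ∘ alpha (tens A B) D E
      = tensm (idm A) (alpha B D E) ∘ alpha A (tens B D) E ∘ tensm (alpha A B D) (idm E) }.
Arguments tens {_} _ A B.
Arguments tensm {_} _ {A B A' B'} f g.
Arguments munit {_} _.
Arguments lam {_} _ A.
Arguments rho {_} _ A.
Arguments alpha {_} _ A B D.

Record FinProducts (C : Cat) := {
  prodo : forall n, ('I_n -> C) -> C;
  pr : forall n (X : 'I_n -> C) (i : 'I_n), Hom (prodo X) (X i);
  ptuple : forall n (X : 'I_n -> C) (Y : C), (forall i, Hom Y (X i)) -> Hom Y (prodo X);
  pr_ptuple : forall n (X : 'I_n -> C) Y (f : forall i, Hom Y (X i)) i,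
      pr X i ∘ ptuple f = f i;
  ptuple_unique : forall n (X : 'I_n -> C) Y (f : forall i, Hom Y (X i))
      (g : Hom Y (prodo X)), (forall i, pr X i ∘ g = f i) -> g = ptuple f }.
Arguments prodo {_} _ {n} X.
Arguments pr {_} _ {n} X i.
Arguments ptuple {_} _ {n X Y} f.

Record OFS (C : Cat) := {
  Ecl : forall A B : C, Hom A B -> Prop;
  Mcl : forall A B : C, Hom A B -> Prop;
  E_iso : forall A B (f : Hom A B), is_iso f -> Ecl f;
  M_iso : forall A B (f : Hom A B), is_iso f -> Mcl f;
  E_comp : forall A B D (f : Hom A B) (g : Hom B D), Ecl f -> Ecl g -> Ecl (g ∘ f);
  M_comp : forall A B D (f : Hom A B) (g : Hom B D), Mcl f -> Mcl g -> Mcl (g ∘ f);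
  diag_unique : forall A B X Y (e : Hom A B) (m : Hom X Y) (f : Hom A X) (g : Hom B Y),
      Ecl e -> Mcl m -> g ∘ e = m ∘ f -> exists! d : Hom B X, d ∘ e = f /\ m ∘ d = g;
  fobj : forall A B : C, Hom A B -> C;
  fe : forall A B (f : Hom A B), Hom A (fobj f);
  fm : forall A B (f : Hom A B), Hom (fobj f) B;
  fe_E : forall A B (f : Hom A B), Ecl (fe f);
  fm_M : forall A B (f : Hom A B), Mcl (fm f);
  fm_fe : forall A B (f : Hom A B), fm f ∘ fe f = f }.
Arguments Ecl {_} _ {A B} f.
Arguments Mcl {_} _ {A B} f.
Arguments fobj {_} _ {A B} f.
Arguments fe {_} _ {A B} f.
Arguments fm {_} _ {A B} f.
Arguments fm_M {_} _ {A B} f.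

Section Slice.
Variables (C : Cat) (MC : Monoidal C) (P : FinProducts C) (F : OFS C).
Local Notation "A ⊗ B" := (tens MC A B) (at level 30).
Local Notation "f ⊗m g" := (tensm MC f g) (at level 30).
Local Notation I := (munit MC).
Local Notation E := (Ecl F).
Local Notation M := (Mcl F).

Definition prodm n (X Y : 'I_n -> C) (f : forall i, Hom (X i) (Y i))
  : Hom (prodo P X) (prodo P Y) := ptuple P (fun i => f i ∘ pr P X i).
Definition canmap n (X : 'I_n -> C) (Y : C)
  : Hom (prodo P X ⊗ Y) (prodo P (fun i => X i ⊗ Y)) :=
  ptuple P (fun i => pr P X i ⊗m idm Y).
Definition powo n (A : C) : C := prodo P (fun _ : 'I_n => A).

Definition E_canmaps := forall n (X : 'I_n -> C) (Y : C), E (canmap X Y).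
Definition E_closed_prod := forall n (X Y : 'I_n -> C) (f : forall i, Hom (X i) (Y i)),
  (forall i, E (f i)) -> E (prodm f).

Variables (T : C) (eta : Hom I T) (mu : Hom (T ⊗ T) T).

Definition is_monoid :=
  [/\ mu ∘ (eta ⊗m idm T) = lam MC T,
      mu ∘ (idm T ⊗m eta) ∘ rho MC T = idm T
    & mu ∘ (mu ⊗m idm T) = mu ∘ (idm T ⊗m mu) ∘ alpha MC T T T].

Definition is_alg_op n (phi : Hom (powo n T) T) :=
  phi ∘ @prodm n (fun _ => T ⊗ T) (fun _ => T) (fun _ => mu)
      ∘ canmap (fun _ : 'I_n => T) T
  = mu ∘ (phi ⊗m idm T).

Record MObj := MkMObj { mcar : C; mmap : Hom mcar T; mmap_M : M mmap }.

Definition is_slice_mor (S S' : MObj) (f : Hom (mcar S) (mcar S')) :=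
  mmap S' ∘ f = mmap S.

Definition Jo : MObj := @MkMObj (fobj F eta) (fm F eta) (fm_M F eta).
Definition q : Hom I (mcar Jo) := fe F eta.

Definition boxfac (S S' : MObj) : Hom (mcar S ⊗ mcar S') T := mu ∘ (mmap S ⊗m mmap S').
Definition box (S S' : MObj) : MObj :=
  @MkMObj (fobj F (boxfac S S')) (fm F (boxfac S S')) (fm_M F (boxfac S S')).
Definition qb (S S' : MObj) : Hom (mcar S ⊗ mcar S') (mcar (box S S')) :=
  fe F (boxfac S S').

(* g = f ⊠ f' (characterizing property of the unique diagonal) *)
Definition is_boxm (S1 S1' S2 S2' : MObj) (f : Hom (mcar S1) (mcar S2))
  (f' : Hom (mcar S1') (mcar S2')) (g : Hom (mcar (box S1 S1')) (mcar (box S2 S2'))) :=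
  g ∘ qb S1 S1' = qb S2 S2' ∘ (f ⊗m f') /\ mmap (box S2 S2') ∘ g = mmap (box S1 S1').

Definition is_lunit (S : MObj) (l : Hom (mcar (box Jo S)) (mcar S)) :=
  l ∘ qb Jo S ∘ (q ⊗m idm (mcar S)) = lam MC (mcar S) /\ mmap S ∘ l = mmap (box Jo S).
Definition runit (S : MObj) : Hom (mcar S) (mcar (box S Jo)) :=
  qb S Jo ∘ (idm (mcar S) ⊗m q) ∘ rho MC (mcar S).
Definition is_assoc (S S' S'' : MObj)
  (a : Hom (mcar (box (box S S') S'')) (mcar (box S (box S' S'')))) :=
  a ∘ qb (box S S') S'' ∘ (qb S S' ⊗m idm (mcar S''))
    = qb S (box S' S'') ∘ (idm (mcar S) ⊗m qb S' S'') ∘ alpha MC (mcar S) (mcar S') (mcar S'')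
  /\ mmap (box S (box S' S'')) ∘ a = mmap (box (box S S') S'').

Definition skew_slice_is_monoidal :=
  [/\ forall S, exists l, @is_lunit S l /\ is_iso l,
      forall S, is_iso (runit S)
    & forall S S' S'', exists a, @is_assoc S S' S'' a /\ is_iso a].

Definition E_closed_tens_slice :=
  forall (S : MObj) (A B : C) (e : Hom A B), E e -> E (e ⊗m idm (mcar S)).

Definition is_graded_alg_op n (R : 'I_n -> MObj) (R' : MObj)
  (psi : forall S : MObj, Hom (prodo P (fun i => mcar (box (R i) S))) (mcar (box R' S))) :=
  (forall (S1 S2 : MObj) (f : Hom (mcar S1) (mcar S2)), @is_slice_mor S1 S2 f ->
     forall (g : forall i, Hom (mcar (box (R i) S1)) (mcar (box (R i) S2)))
            (g' : Hom (mcar (box R' S1)) (mcar (box R' S2))),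
     (forall i, @is_boxm (R i) S1 (R i) S2 (idm (mcar (R i))) f (g i)) ->
     @is_boxm R' S1 R' S2 (idm (mcar R')) f g' ->
     g' ∘ psi S1 = psi S2 ∘ prodm g)
  /\
  (forall (S S' : MObj)
     (a : forall i, Hom (mcar (box (box (R i) S) S')) (mcar (box (R i) (box S S'))))
     (a' : Hom (mcar (box (box R' S) S')) (mcar (box R' (box S S')))),
     (forall i, is_assoc (a i)) -> is_assoc a' ->
     psi (box S S') ∘ prodm a ∘ prodm (fun i => qb (box (R i) S) S')
       ∘ canmap (fun i => mcar (box (R i) S)) (mcar S')
     = a' ∘ qb (box R' S) S' ∘ (psi S ⊗m idm (mcar S'))).

Definition grades n (R : 'I_n -> MObj) (R' : MObj)
  (psi : forall S : MObj, Hom (prodo P (fun i => mcar (box (R i) S))) (mcar (box R' S)))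
  (phi : Hom (powo n T) T) :=
  forall S : MObj, mmap (box R' S) ∘ psi S = phi ∘ prodm (fun i => mmap (box (R i) S)).

End Slice.

(* Put e_S := ∏_i q_{R_i,S} ∘ <π_i ⊗ S>_i : (∏_i R_i) ⊗ S -> ∏_i (R_i ⊠ S).
   It lies in E and ψ_S ∘ e_S = q_{R',S} ∘ (p ⊗ S), so ψ_S is in E, and by
   orthogonality a map out of ∏_i (R_i ⊠ S) into an object of M/T is determined
   by its composite with e_S and its composite down to T.  Every identity of (1)
   is checked in this way, where it reduces to the naturality of <π_i ⊗ ->, the
   defining equations of the associators, and the algebraicity of φ.
   For (2), ψ' is determined by its component at the unit J: the arrow
   r_{R''}^-1 ∘ ψ'_J ∘ ∏_i r_{R_i} lies over T, so the square r' ∘ p = r'' ∘ (-)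
   has a unique diagonal f.  Conversely the triangle law of M/T, the
   multiplicativity of ψ' at (J, S) and its naturality along the left unitor
   J ⊠ S -> S rebuild every ψ'_S from ψ'_J. *)
From mathcomp Require Import all_boot.
Set Implicit Arguments.
Unset Strict Implicit.
Unset Printing Implicit Defensive.

Section CompositeRewriting.
Variable C : Cat.

Lemma comp_rw2 (A B D E : C) (a : Hom D E) (b : Hom B D) (c : Hom B E) :
  a ∘ b = c -> forall k : Hom A B, a ∘ (b ∘ k) = c ∘ k.
Proof. by move=> <- k; rewrite comp_assoc. Qed.

Lemma comp_rw3 (A B D E G : C) (a : Hom E G) (b : Hom D E) (c : Hom B D) (d : Hom B G) :
  a ∘ b ∘ c = d -> forall k : Hom A B, a ∘ (b ∘ (c ∘ k)) = d ∘ k.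
Proof. by move=> <- k; rewrite !comp_assoc. Qed.

Lemma comp_rw3_end (B D E G : C) (a : Hom E G) (b : Hom D E) (c : Hom B D) (d : Hom B G) :
  a ∘ b ∘ c = d -> a ∘ (b ∘ c) = d.
Proof. by move=> <-; rewrite !comp_assoc. Qed.

Lemma comp_rw4 (A B D E G H : C) (a : Hom G H) (a' : Hom E G) (b : Hom D E)
    (c : Hom B D) (d : Hom B H) :
  a ∘ a' ∘ b ∘ c = d -> forall k : Hom A B, a ∘ (a' ∘ (b ∘ (c ∘ k))) = d ∘ k.
Proof. by move=> <- k; rewrite !comp_assoc. Qed.

Lemma comp_rw4_end (B D E G H : C) (a : Hom G H) (a' : Hom E G) (b : Hom D E)
    (c : Hom B D) (d : Hom B H) :
  a ∘ a' ∘ b ∘ c = d -> a ∘ (a' ∘ (b ∘ c)) = d.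
Proof. by move=> <-; rewrite !comp_assoc. Qed.

End CompositeRewriting.

Ltac rassoc := repeat rewrite -comp_assoc.
(* [crw H] rewrites with an equation [H] between composites of up to four
   arrows inside a composite, after bracketing everything to the right. *)
Ltac crw H := rassoc;
  first [ rewrite (comp_rw4 H) | rewrite (comp_rw4_end H) | rewrite (comp_rw3 H)
        | rewrite (comp_rw3_end H) | rewrite (comp_rw2 H) | rewrite H ];
  rassoc.

Section FactorizationSystem.
Variables (C : Cat) (F : OFS C).

Lemma EM_cancel (A B X Y : C) (e : Hom A B) (m : Hom X Y) (u v : Hom B X) :
  Ecl F e -> Mcl F m -> u ∘ e = v ∘ e -> m ∘ u = m ∘ v -> u = v.
Proof.
move=> He Hm Hue Hmu.
have [d [_ Hd]] := diag_unique He Hm (f := u ∘ e) (g := m ∘ u) (esym (comp_assoc _ _ _)).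
by rewrite -(Hd u (conj erefl erefl)) (Hd v).
Qed.

Lemma E_cancel_comp (A B D : C) (e : Hom A B) (g : Hom B D) :
  Ecl F e -> Ecl F (g ∘ e) -> Ecl F g.
Proof.
move=> He Hge; rewrite -(fm_fe F g); apply: (E_comp (fe_E F g)); apply: E_iso.
have Hm := fm_M F g.
have Hsq : idm D ∘ (g ∘ e) = fm F g ∘ (fe F g ∘ e) by rewrite comp_idl comp_assoc fm_fe.
have [d [[Hde Hmd] _]] := diag_unique Hge Hm Hsq.
exists d; split=> //.
apply: (EM_cancel (E_comp He (fe_E F g)) Hm).
  by rewrite comp_idl -comp_assoc (comp_assoc (fm F g)) fm_fe.
by rewrite comp_assoc Hmd comp_idl comp_idr.
Qed.

End FactorizationSystem.

Section Products.
Variables (C : Cat) (P : FinProducts C).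

Lemma prod_ext n (X : 'I_n -> C) (Y : C) (u v : Hom Y (prodo P X)) :
  (forall i, pr P X i ∘ u = pr P X i ∘ v) -> u = v.
Proof.
move=> H.
by rewrite (ptuple_unique H) -(ptuple_unique (f := fun i => pr P X i ∘ v) (g := v)).
Qed.

Lemma pr_prodm n (X Y : 'I_n -> C) (f : forall i, Hom (X i) (Y i)) i :
  pr P Y i ∘ prodm P f = f i ∘ pr P X i.
Proof. exact: pr_ptuple. Qed.

Lemma prodm_ext n (X Y : 'I_n -> C) (f g : forall i, Hom (X i) (Y i)) :
  (forall i, f i = g i) -> prodm P f = prodm P g.
Proof. by move=> H; apply: prod_ext => i; rewrite !pr_prodm H. Qed.

Lemma prodm_comp n (X Y Z : 'I_n -> C) (f : forall i, Hom (X i) (Y i))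
    (g : forall i, Hom (Y i) (Z i)) :
  prodm P g ∘ prodm P f = prodm P (fun i => g i ∘ f i).
Proof.
apply: prod_ext => i.
by rewrite comp_assoc !pr_prodm -comp_assoc pr_prodm comp_assoc.
Qed.

Lemma prodm_id n (X : 'I_n -> C) : prodm P (fun i => idm (X i)) = idm _.
Proof. by apply: prod_ext => i; rewrite pr_prodm comp_idl comp_idr. Qed.

End Products.

Section Tensor.
Variables (C : Cat) (MC : Monoidal C).
Local Notation "f ⊗m g" := (tensm MC f g) (at level 30).

Lemma tensl_comp (A1 A2 A3 B : C) (f : Hom A1 A2) (g : Hom A2 A3) :
  (g ∘ f) ⊗m idm B = (g ⊗m idm B) ∘ (f ⊗m idm B).
Proof. by rewrite -tensm_comp comp_idl. Qed.

Lemma tensr_comp (A B1 B2 B3 : C) (f : Hom B1 B2) (g : Hom B2 B3) :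
  idm A ⊗m (g ∘ f) = (idm A ⊗m g) ∘ (idm A ⊗m f).
Proof. by rewrite -tensm_comp comp_idl. Qed.

Lemma tens_compl (A1 A2 A3 B B' : C) (f : Hom A2 A3) (g : Hom A1 A2) (h : Hom B B') :
  (f ∘ g) ⊗m h = (f ⊗m idm B') ∘ (g ⊗m h).
Proof. by rewrite -tensm_comp comp_idl. Qed.

Lemma tens_split (A A' B B' : C) (f : Hom A A') (g : Hom B B') :
  f ⊗m g = (idm A' ⊗m g) ∘ (f ⊗m idm B).
Proof. by rewrite -tensm_comp comp_idl comp_idr. Qed.

Lemma tens_interch (A A' B B' : C) (f : Hom A A') (g : Hom B B') :
  (f ⊗m idm B') ∘ (idm A ⊗m g) = (idm A' ⊗m g) ∘ (f ⊗m idm B).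
Proof. by rewrite -!tensm_comp !comp_idl !comp_idr. Qed.

Variable P : FinProducts C.

Lemma pr_canmap n (X : 'I_n -> C) (Y : C) i :
  pr P _ i ∘ canmap MC P X Y = pr P X i ⊗m idm Y.
Proof. exact: pr_ptuple. Qed.

Lemma canmap_nat n (X Y : 'I_n -> C) (A B : C) (g : forall i, Hom (X i) (Y i))
    (f : Hom A B) :
  canmap MC P Y B ∘ (prodm P g ⊗m f) = prodm P (fun i => g i ⊗m f) ∘ canmap MC P X A.
Proof.
apply: prod_ext => i.
rewrite !comp_assoc pr_canmap pr_prodm -comp_assoc pr_canmap -!tensm_comp.
by rewrite pr_prodm !comp_idl !comp_idr.
Qed.

Lemma canmap_natr n (X : 'I_n -> C) (A B : C) (f : Hom A B) :
  prodm P (fun i => idm (X i) ⊗m f) ∘ canmap MC P X A = canmap MC P X B ∘ (idm _ ⊗m f).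
Proof. by rewrite -(prodm_id P X) canmap_nat. Qed.

Lemma canmap_alpha n (X : 'I_n -> C) (A B : C) :
  prodm P (fun i => alpha MC (X i) A B) ∘ canmap MC P (fun i => tens MC (X i) A) B
    ∘ (canmap MC P X A ⊗m idm B)
  = canmap MC P X (tens MC A B) ∘ alpha MC (prodo P X) A B.
Proof.
apply: prod_ext => i.
rewrite !comp_assoc pr_prodm pr_canmap; rassoc.
rewrite (comp_rw2 (pr_canmap _ _ _)) -tensm_comp comp_idl pr_canmap.
by rewrite (alpha_nat MC) tensm_id.
Qed.

End Tensor.

Section SliceCategory.
Variables (C : Cat) (MC : Monoidal C) (F : OFS C).
Variables (T : C) (eta : Hom (munit MC) T) (mu : Hom (tens MC T T) T).
Local Notation "f ⊗m g" := (tensm MC f g) (at level 30).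
Local Notation MO := (MObj F T).
Local Notation J := (Jo F eta).

Lemma mmap_qb (S S' : MO) : mmap (box mu S S') ∘ qb mu S S' = mu ∘ (mmap S ⊗m mmap S').
Proof. exact: fm_fe. Qed.

Lemma slice_mor_id (S : MO) : is_slice_mor (idm (mcar S)).
Proof. exact: comp_idr. Qed.

Lemma boxm_exists (S1 S1' S2 S2' : MO) (f : Hom (mcar S1) (mcar S2))
    (f' : Hom (mcar S1') (mcar S2')) :
  is_slice_mor f -> is_slice_mor f' -> exists g, is_boxm (mu := mu) f f' g.
Proof.
move=> Hf Hf'.
have Hsq : mmap (box mu S1 S1') ∘ qb mu S1 S1'
           = mmap (box mu S2 S2') ∘ (qb mu S2 S2' ∘ (f ⊗m f')).
  by rewrite comp_assoc !mmap_qb -comp_assoc -tensm_comp Hf Hf'.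
by have [d [[H1 H2] _]] := diag_unique (fe_E F _) (fm_M F _) Hsq; exists d.
Qed.

Lemma mmap_runit (Hunitr : mu ∘ (idm T ⊗m eta) ∘ rho MC T = idm T) (S : MO) :
  mmap (box mu S J) ∘ runit eta mu S = mmap S.
Proof.
rewrite /runit; crw (mmap_qb S J).
rewrite (comp_rw2 (esym (tensm_comp _ _ _ _ _))) comp_idr (fm_fe F eta).
rewrite (tens_split MC (mmap S) eta); rassoc.
by rewrite -(rho_nat MC (mmap S)) !comp_assoc Hunitr comp_idl.
Qed.

Lemma runit_nat (S1 S2 : MO) (f : Hom (mcar S1) (mcar S2)) g :
  is_boxm (S1' := J) (S2' := J) (mu := mu) f (idm _) g ->
  g ∘ runit eta mu S1 = runit eta mu S2 ∘ f.
Proof.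
case=> Hg _; rewrite /runit; crw Hg.
rewrite (comp_rw2 (esym (tensm_comp _ _ _ _ _))) comp_idl comp_idr.
by rewrite (tens_split MC f (q F eta)); rassoc; rewrite -(rho_nat MC f).
Qed.

Lemma triangle_qb (X S : MO) l a B :
  is_lunit (eta := eta) (mu := mu) (S := S) l ->
  is_assoc (S := X) (S' := J) (S'' := S) (mu := mu) a ->
  is_boxm (S1 := X) (S2 := X) (mu := mu) (idm _) l B ->
  B ∘ a ∘ qb mu (box mu X J) S ∘ (runit eta mu X ⊗m idm (mcar S)) = qb mu X S.
Proof.
move=> [Hl _] [Ha _] [HB _].
rewrite /runit !tensl_comp; crw Ha; crw HB.
rewrite (comp_rw2 (alpha_nat MC _ _ _)); rassoc.
rewrite (comp_rw2 (esym (tensr_comp _ _ _ _))) (comp_rw2 (esym (tensr_comp _ _ _ _))) Hl.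
crw (triangle MC (mcar X) (mcar S)).
by rewrite -tensl_comp rho_inv2 tensm_id comp_idr.
Qed.

End SliceCategory.

Section GradedOperation.
Variables (C : Cat) (MC : Monoidal C) (P : FinProducts C) (F : OFS C).
Variables (T : C) (eta : Hom (munit MC) T) (mu : Hom (tens MC T T) T).
Local Notation "f ⊗m g" := (tensm MC f g) (at level 30).
Local Notation MO := (MObj F T).
Local Notation J := (Jo F eta).
Variables (n : nat) (R : 'I_n -> MO).

Definition qprod (S : MO) :
    Hom (tens MC (prodo P (fun i => mcar (R i))) (mcar S))
        (prodo P (fun i => mcar (box mu (R i) S))) :=
  prodm P (fun i => qb mu (R i) S) ∘ canmap MC P (fun i => mcar (R i)) (mcar S).

Lemma qprod_E (HEcan : E_canmaps MC P F) (HEprod : E_closed_prod P F) S :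
  Ecl F (qprod S).
Proof. by apply: (E_comp (HEcan _ _ _)); apply: HEprod => i; apply: fe_E. Qed.

Lemma prodm_runit :
  prodm P (fun i => runit eta mu (R i))
  = qprod J ∘ (idm _ ⊗m q F eta) ∘ rho MC (prodo P (fun i => mcar (R i))).
Proof.
apply: prod_ext => i; rewrite pr_prodm /runit /qprod; rassoc.
rewrite (comp_rw2 (pr_prodm P _ _)); rassoc.
rewrite (comp_rw2 (pr_canmap MC P _ _ _)); rassoc.
by rewrite (comp_rw2 (tens_interch MC _ _)); rassoc; rewrite -(rho_nat MC).
Qed.

Variables (phi : Hom (powo P n T) T) (R' : C).
Variables (p : Hom (prodo P (fun i => mcar (R i))) R') (r' : Hom R' T) (Hr' : Mcl F r').
Local Notation R'o := (MkMObj Hr').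
Variable psi : forall S : MO,
  Hom (prodo P (fun i => mcar (box mu (R i) S))) (mcar (box mu R'o S)).
Hypothesis psi_qb : forall S,
  psi S ∘ prodm P (fun i => qb mu (R i) S) ∘ canmap MC P (fun i => mcar (R i)) (mcar S)
  = qb mu R'o S ∘ (p ⊗m idm (mcar S)).
Hypothesis psi_grades : grades psi phi.
Hypotheses (HEcan : E_canmaps MC P F) (HEprod : E_closed_prod P F).

Lemma psi_qprod S : psi S ∘ qprod S = qb mu R'o S ∘ (p ⊗m idm (mcar S)).
Proof. by rewrite /qprod comp_assoc psi_qb. Qed.

Lemma psi_natural (S1 S2 : MO) (f : Hom (mcar S1) (mcar S2)) g g' :
  (forall i, is_boxm (S1 := R i) (S2 := R i) (mu := mu) (idm _) f (g i)) ->
  is_boxm (S1 := R'o) (S2 := R'o) (mu := mu) (idm _) f g' ->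
  g' ∘ psi S1 = psi S2 ∘ prodm P g.
Proof.
move=> Hg Hg'.
apply: (EM_cancel (qprod_E HEcan HEprod S1) (fm_M F _)).
  rewrite -comp_assoc psi_qprod; crw Hg'.1.
  rewrite -tens_interch /qprod; rassoc.
  rewrite (comp_rw2 (prodm_comp P _ _)) (prodm_ext P (fun i => (Hg i).1)).
  rewrite -prodm_comp; rassoc; rewrite canmap_natr.
  by crw (psi_qb S2).
rewrite comp_assoc Hg'.2 psi_grades comp_assoc psi_grades -comp_assoc prodm_comp.
by congr (phi ∘ _); apply: prodm_ext => i; rewrite (Hg i).2.
Qed.

Hypotheses (HEtens : E_closed_tens_slice MC F T) (Hphi : is_alg_op mu phi).

Lemma psi_multiplicative (S S' : MO) a a' :
  (forall i, is_assoc (S := R i) (S' := S) (S'' := S') (mu := mu) (a i)) ->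
  is_assoc (S := R'o) (S' := S) (S'' := S') (mu := mu) a' ->
  psi (box mu S S') ∘ prodm P a ∘ prodm P (fun i => qb mu (box mu (R i) S) S')
    ∘ canmap MC P (fun i => mcar (box mu (R i) S)) (mcar S')
  = a' ∘ qb mu (box mu R'o S) S' ∘ (psi S ⊗m idm (mcar S')).
Proof.
move=> Ha Ha'.
apply: (EM_cancel (HEtens S' (qprod_E HEcan HEprod S)) (fm_M F _)).
  transitivity (qb mu R'o (box mu S S') ∘ (idm _ ⊗m qb mu S S')
                ∘ (p ⊗m idm _) ∘ alpha MC _ _ _).
    rewrite /qprod tensl_comp; rassoc.
    rewrite (comp_rw2 (canmap_nat MC P _ _)); rassoc.
    rewrite (comp_rw2 (prodm_comp P _ _)) (comp_rw2 (prodm_comp P _ _)).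
    rewrite (prodm_ext P (fun i => (Ha i).1)) -!prodm_comp; rassoc.
    crw (canmap_alpha MC P (fun i => mcar (R i)) (mcar S) (mcar S')).
    rewrite (comp_rw2 (canmap_natr MC P _ _)); crw (psi_qb (box mu S S')).
    by rewrite (comp_rw2 (tens_interch MC p (qb mu S S'))) -!comp_assoc.
  symmetry; rassoc; rewrite -tensl_comp psi_qprod tensl_comp; crw Ha'.1.
  by rewrite (alpha_nat MC _ _ _) tensm_id.
transitivity (phi ∘ prodm P (fun i => mu ∘ (mmap (box mu (R i) S) ⊗m mmap S'))
              ∘ canmap MC P (fun i => mcar (box mu (R i) S)) (mcar S')).
  rewrite !comp_assoc psi_grades; rassoc.
  rewrite (comp_rw2 (prodm_comp P _ _)) (comp_rw2 (prodm_comp P _ _)).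
  congr (_ ∘ (_ ∘ _)); apply: prodm_ext => i.
  by rewrite comp_assoc (Ha i).2 mmap_qb.
symmetry; rewrite !comp_assoc Ha'.2 mmap_qb -comp_assoc -tensm_comp psi_grades comp_idr.
rewrite tens_compl comp_assoc -Hphi; rassoc.
rewrite (canmap_nat MC P _ _); rassoc.
by rewrite (comp_rw2 (prodm_comp P _ _)) !comp_assoc.
Qed.

Lemma psi_graded_alg_op : is_graded_alg_op psi.
Proof.
split=> [S1 S2 f _ g g' Hg Hg' | S S' a a' Ha Ha'].
- exact: (psi_natural Hg Hg').
- exact: (psi_multiplicative Ha Ha').
Qed.

Hypothesis Hp : Ecl F p.

Lemma psi_E (S : MO) : Ecl F (psi S).
Proof.
apply: (E_cancel_comp (qprod_E HEcan HEprod S)); rewrite psi_qprod.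
exact: (E_comp (HEtens S Hp) (fe_E F _)).
Qed.

Lemma psi_runit :
  psi J ∘ prodm P (fun i => runit eta mu (R i)) = runit eta mu R'o ∘ p.
Proof.
rewrite prodm_runit /qprod; crw (psi_qb J).
rewrite (comp_rw2 (tens_interch MC p (q F eta))); rassoc.
by rewrite -(rho_nat MC p) /runit; rassoc.
Qed.

Section UniversalProperty.
Variable R'' : MO.
Variable psi' : forall S : MO,
  Hom (prodo P (fun i => mcar (box mu (R i) S))) (mcar (box mu R'' S)).
Hypotheses (Hpsi' : is_graded_alg_op psi') (psi'_grades : grades psi' phi).
Hypothesis Hmon : skew_slice_is_monoidal F eta mu.

Lemma boxm_psi_of_unit_component (f : Hom R' (mcar R'')) :
  runit eta mu R'' ∘ f ∘ p = psi' J ∘ prodm P (fun i => runit eta mu (R i)) ->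
  forall S g, is_boxm (S1 := R'o) (S2 := R'') (mu := mu) f (idm (mcar S)) g ->
  g ∘ psi S = psi' S.
Proof.
move=> Hfp S g Hg.
case: Hmon Hpsi' => Hl _ Ha [Hnat Hmul].
have [l [Hl1 _]] := Hl S.
have Hls : is_slice_mor (S := box mu J S) (S' := S) l := Hl1.2.
have [B HB] := fin_all_exists (fun i => boxm_exists mu (slice_mor_id (R i)) Hls).
have [a Hai] := fin_all_exists (fun i =>
  let: ex_intro a (conj Hai _) := Ha (R i) J S in ex_intro _ a Hai).
have [B'' HB''] := boxm_exists mu (slice_mor_id R'') Hls.
have [a'' [Ha'' _]] := Ha R'' J S.
apply: (EM_cancel (qprod_E HEcan HEprod S) (fm_M F _)); last first.
  by rewrite comp_assoc Hg.2 psi_grades psi'_grades.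
rewrite -comp_assoc psi_qprod; crw Hg.1.
rewrite -tensl_comp -(triangle_qb Hl1 Ha'' HB'') -comp_assoc -tensl_comp.
rewrite (comp_assoc (runit eta mu R'') f p) Hfp tensl_comp; rassoc.
crw (esym (Hmul J S a a'' Hai Ha'')).
crw (Hnat _ _ l Hls B B'' HB HB'').
rewrite canmap_nat; rassoc.
rewrite (comp_rw2 (prodm_comp P _ _)) (comp_rw2 (prodm_comp P _ _)).
rewrite (comp_rw2 (prodm_comp P _ _)).
by rewrite (prodm_ext P (fun i => triangle_qb Hl1 (Hai i) (HB i))) /qprod comp_assoc.
Qed.

Lemma unit_component_of_boxm_psi (f : Hom R' (mcar R'')) :
  is_slice_mor (S := R'o) (S' := R'') f ->
  (forall S g, is_boxm (S1 := R'o) (S2 := R'') (mu := mu) f (idm (mcar S)) g ->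
     g ∘ psi S = psi' S) ->
  runit eta mu R'' ∘ f ∘ p = psi' J ∘ prodm P (fun i => runit eta mu (R i)).
Proof.
move=> Hf Hfg.
have [g Hg] := boxm_exists mu (S1' := J) (S2' := J) Hf (slice_mor_id J).
rewrite -(Hfg J g Hg) -(runit_nat Hg).
by rewrite -(comp_assoc g (psi J)) psi_runit comp_assoc.
Qed.

Hypothesis Hunitr : mu ∘ (idm T ⊗m eta) ∘ rho MC T = idm T.
Hypothesis Hfac : r' ∘ p = phi ∘ prodm P (fun i => mmap (R i)).

Lemma mmap_psi'_runit :
  mmap (box mu R'' J) ∘ (psi' J ∘ prodm P (fun i => runit eta mu (R i))) = r' ∘ p.
Proof.
rewrite Hfac comp_assoc psi'_grades -comp_assoc prodm_comp.
by congr (phi ∘ _); apply: prodm_ext => i; rewrite mmap_runit.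
Qed.

Lemma psi_universal : exists! f : Hom R' (mcar R''),
  is_slice_mor (S := R'o) (S' := R'') f /\
  (forall S g, is_boxm (S1 := R'o) (S2 := R'') (mu := mu) f (idm (mcar S)) g ->
     g ∘ psi S = psi' S).
Proof.
case: (Hmon) => _ Hr _; have [ri [Hri Hrri]] := Hr R''.
pose h := ri ∘ (psi' J ∘ prodm P (fun i => runit eta mu (R i))).
have mmap_ri : mmap R'' ∘ ri = mmap (box mu R'' J).
  by rewrite -(mmap_runit Hunitr R'') -comp_assoc Hrri comp_idr.
have Hsq : r' ∘ p = mmap R'' ∘ h by rewrite /h comp_assoc mmap_ri mmap_psi'_runit.
have [f0 [[Hf0p Hf0m] Hf0u]] := diag_unique Hp (mmap_M R'') Hsq.
exists f0; split.
  split=> //; apply: boxm_psi_of_unit_component.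
  by rewrite -comp_assoc Hf0p /h comp_assoc Hrri comp_idl.
move=> f1 [Hf1m Hf1g]; apply: Hf0u; split=> //.
rewrite /h -(unit_component_of_boxm_psi Hf1m Hf1g).
by rewrite (comp_assoc ri _ p) (comp_assoc ri _ f1) Hri comp_idl.
Qed.

End UniversalProperty.

End GradedOperation.

Theorem theorem5p6
  (C : Cat) (MC : Monoidal C) (P : FinProducts C) (F : OFS C)
  (T : C) (eta : Hom (munit MC) T) (mu : Hom (tens MC T T) T)
  (HT : is_monoid eta mu)
  (HEtens : E_closed_tens_slice MC F T)
  (Hmon : skew_slice_is_monoidal F eta mu)
  (HEcan : E_canmaps MC P F)
  (HEprod : E_closed_prod P F)
  (n : nat) (phi : Hom (powo P n T) T) (Hphi : is_alg_op mu phi)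
  (R : 'I_n -> MObj F T)
  (R' : C) (p : Hom (prodo P (fun i => mcar (R i))) R') (r' : Hom R' T)
  (Hp : Ecl F p) (Hr' : Mcl F r')
  (Hfac : r' ∘ p = phi ∘ prodm P (fun i => mmap (R i)))
  (psi : forall S : MObj F T,
     Hom (prodo P (fun i => mcar (box mu (R i) S))) (mcar (box mu (MkMObj Hr') S)))
  (Hpsi : forall S : MObj F T,
     psi S ∘ prodm P (fun i => qb mu (R i) S) ∘ canmap MC P (fun i => mcar (R i)) (mcar S)
       = qb mu (MkMObj Hr') S ∘ tensm MC p (idm (mcar S))
     /\ mmap (box mu (MkMObj Hr') S) ∘ psi S
       = phi ∘ prodm P (fun i => mmap (box mu (R i) S))) :
  (* (1) *)
  (is_graded_alg_op psi /\ grades psi phi /\ (forall S : MObj F T, Ecl F (psi S)))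
  /\
  (* (2) *)
  (forall (R'' : MObj F T)
          (psi' : forall S : MObj F T,
             Hom (prodo P (fun i => mcar (box mu (R i) S))) (mcar (box mu R'' S))),
     is_graded_alg_op psi' -> grades psi' phi ->
     exists! f : Hom R' (mcar R''),
       @is_slice_mor C F T (MkMObj Hr') R'' f /\
       (forall (S : MObj F T)
               (g : Hom (mcar (box mu (MkMObj Hr') S)) (mcar (box mu R'' S))),
          @is_boxm C MC F T mu (MkMObj Hr') S R'' S f (idm (mcar S)) g ->
          g ∘ psi S = psi' S)).
Proof.
have psi_qb S := (Hpsi S).1.
have psi_grades : grades psi phi := fun S => (Hpsi S).2.
have Hunitr : mu ∘ tensm MC (idm T) eta ∘ rho MC T = idm T by case: HT.
split; first split.
- exact: psi_graded_alg_op psi_qb psi_grades HEcan HEprod HEtens Hphi.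
- split; first exact: psi_grades.
  exact: psi_E psi_qb HEcan HEprod HEtens Hp.
- move=> R'' psi' Hpsi' psi'_grades.
  exact (psi_universal psi_qb psi_grades HEcan HEprod Hp Hpsi' psi'_grades Hmon Hunitr Hfac).
Qed.
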